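(* Let $\varphi_{nc}(z)=\dfrac{1+z}{\cos z}$. For every $r\in(0,1)$, $$\min_{|z|=r}\operatorname{Re}\varphi_{nc}(z)=\varphi_{nc}(-r)\quad\text{and}\quad \max_{|z|=r}\operatorname{Re}\varphi_{nc}(z)=\varphi_{nc}(r).$$ *)

From Stdlib Require Import Reals.
From Coquelicot Require Import Coquelicot.
Open Scope R_scope.

Definition Cexp (z : C) : C :=
  (exp (Re z) * cos (Im z), exp (Re z) * sin (Im z)).

Definition Ccos (z : C) : C :=
  Cdiv (Cplus (Cexp (Cmult Ci z)) (Cexp (Copp (Cmult Ci z)))) (RtoC 2).

Definition phi_nc (z : C) : C := Cdiv (Cplus (RtoC 1) z) (Ccos z).

From Stdlib Require Import Reals Lra.
From Coquelicot Require Import Coquelicot.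
Open Scope R_scope.

(* Write z = x + i y with x^2 + y^2 = r^2. Since cos z = cos x cosh y - i sin x sinh y,
   |cos z|^2 = cos^2 x + sinh^2 y >= cos^2 r; together with |1 + z| <= 1 + r this gives
   Re phi_nc(z) <= |phi_nc(z)| <= phi_nc(r). The lower bound Re phi_nc(z) >= phi_nc(-r) is the
   inequality
     (1 - r) (cos^2 x + sinh^2 y) <= cos r ((1 + x) cos x cosh y - y sin x sinh y),
   which is even in y. Once cos, sin, cosh and sinh are replaced by low-order Taylor bounds
   valid on [0, 1], it reduces, separately for x >= 0 and x <= 0, to the nonnegativity of a
   polynomial in r, x and k = cos r. That polynomial increases with k for k >= 1 - r^2/2, and
   at k = 1 - r^2/2 it is a polynomial in r and x alone, nonnegative for |x| <= r < 1. *)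

Lemma le_of_is_derive_le (f g df dg : R -> R) (a b : R) :
  a <= b -> f a <= g a ->
  (forall t, a <= t <= b -> is_derive f t (df t)) ->
  (forall t, a <= t <= b -> is_derive g t (dg t)) ->
  (forall t, a <= t <= b -> df t <= dg t) -> f b <= g b.
Proof.
  intros hab hfg hf hg hd.
  assert (hder : forall t, a <= t <= b -> is_derive (fun u => g u - f u) t (dg t - df t))
    by (intros t ht; apply (is_derive_minus g f); auto).
  destruct (MVT_gen (fun u => g u - f u) a b (fun t => dg t - df t)) as [c [hc he]];
    rewrite Rmin_left, Rmax_right in * by lra.
  - intros t ht; apply hder; lra.
  - intros t ht; apply continuity_pt_filterlim.
    apply (ex_derive_continuous (K := R_AbsRing) (V := R_NormedModule) (fun u => g u - f u)).
    eexists; apply hder, ht.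
  - assert (df c <= dg c) by (apply hd, hc).
    nra.
Qed.

Lemma is_derive_cosh t : is_derive cosh t (sinh t).
Proof. apply is_derive_Reals, derivable_pt_lim_cosh. Qed.

Lemma is_derive_sinh t : is_derive sinh t (cosh t).
Proof. apply is_derive_Reals, derivable_pt_lim_sinh. Qed.

Lemma cosh_neg y : cosh (- y) = cosh y.
Proof. unfold cosh; rewrite Ropp_involutive; field. Qed.

Lemma sinh_neg y : sinh (- y) = - sinh y.
Proof. unfold sinh; rewrite Ropp_involutive; field. Qed.

Lemma cosh_sqr_sub_sinh_sqr y : cosh y ^ 2 - sinh y ^ 2 = 1.
Proof.
  unfold cosh, sinh.
  assert (exp y * exp (- y) = 1) by (rewrite <- exp_plus, Rplus_opp_r; apply exp_0).
  nra.
Qed.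

Lemma sinh_ge_0 t : 0 <= t -> 0 <= sinh t.
Proof.
  intros [ht | <-]; [apply Rlt_le; rewrite <- sinh_0; apply sinh_lt, ht | rewrite sinh_0; lra].
Qed.

Lemma cosh_ge_1 y : 0 <= y -> 1 <= cosh y.
Proof.
  intros hy.
  apply (le_of_is_derive_le (fun _ => 1) cosh (fun _ => 0) sinh 0 y); try lra.
  - rewrite cosh_0; lra.
  - intros; auto_derive; auto.
  - intros; apply is_derive_cosh.
  - intros t ht; apply sinh_ge_0; lra.
Qed.

Lemma id_le_sinh y : 0 <= y -> y <= sinh y.
Proof.
  intros hy.
  apply (le_of_is_derive_le (fun t => t) sinh (fun _ => 1) cosh 0 y); try lra.
  - rewrite sinh_0; lra.
  - intros; auto_derive; auto.
  - intros; apply is_derive_sinh.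
  - intros t ht; apply cosh_ge_1; lra.
Qed.

Lemma cosh_ge_quadratic y : 0 <= y -> 1 + y ^ 2 / 2 <= cosh y.
Proof.
  intros hy.
  apply (le_of_is_derive_le (fun t => 1 + t ^ 2 / 2) cosh (fun t => t) sinh 0 y);
    try lra.
  - rewrite cosh_0; lra.
  - intros; auto_derive; [easy | field].
  - intros; apply is_derive_cosh.
  - intros t ht; apply id_le_sinh; lra.
Qed.

Lemma cosh_le_2 y : 0 <= y <= 1 -> cosh y <= 2.
Proof.
  intros hy.
  assert (cosh 1 <= 2).
  { unfold cosh; pose proof exp_le_3.
    assert (exp (Ropp 1) < exp 0) by (apply exp_increasing; lra).
    rewrite exp_0 in *; lra. }
  enough (cosh y <= cosh 1) by lra.
  apply (le_of_is_derive_le (fun _ => cosh y) cosh (fun _ => 0) sinh y 1); try lra.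
  - intros; auto_derive; auto.
  - intros; apply is_derive_cosh.
  - intros t ht; apply sinh_ge_0; lra.
Qed.

Lemma sinh_le_2x y : 0 <= y <= 1 -> sinh y <= 2 * y.
Proof.
  intros hy.
  apply (le_of_is_derive_le sinh (fun t => 2 * t) cosh (fun _ => 2) 0 y); try lra.
  - rewrite sinh_0; lra.
  - intros; apply is_derive_sinh.
  - intros; auto_derive; [easy | ring].
  - intros t ht; apply cosh_le_2; lra.
Qed.

Lemma cosh_le_quadratic y : 0 <= y <= 1 -> cosh y <= 1 + y ^ 2.
Proof.
  intros hy.
  apply (le_of_is_derive_le cosh (fun t => 1 + t ^ 2) sinh (fun t => 2 * t) 0 y); try lra.
  - rewrite cosh_0; lra.
  - intros; apply is_derive_cosh.
  - intros; auto_derive; [easy | ring].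
  - intros t ht; apply sinh_le_2x; lra.
Qed.

Lemma sinh_le_cubic y : 0 <= y <= 1 -> sinh y <= y + y ^ 3 / 3.
Proof.
  intros hy.
  apply (le_of_is_derive_le sinh (fun t => t + t ^ 3 / 3) cosh (fun t => 1 + t ^ 2) 0 y);
    try lra.
  - rewrite sinh_0; lra.
  - intros; apply is_derive_sinh.
  - intros; auto_derive; [easy | field].
  - intros t ht; apply cosh_le_quadratic; lra.
Qed.

Lemma sinh_le_linear y : 0 <= y <= 1 -> sinh y <= 4 / 3 * y.
Proof.
  intros hy; pose proof (sinh_le_cubic y hy).
  assert (y ^ 3 <= y) by (simpl; nra).
  lra.
Qed.

Lemma cos_ge_quadratic r : - PI / 2 <= r <= PI / 2 -> 1 - r ^ 2 / 2 <= cos r.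
Proof.
  intros hr; destruct (cos_bound r 0 (proj1 hr) (proj2 hr)) as [h _].
  unfold cos_approx, cos_term in h; simpl in h; lra.
Qed.

Lemma sin_ge_cubic a : 0 <= a <= PI -> a - a ^ 3 / 6 <= sin a.
Proof.
  intros ha; destruct (sin_bound a 0 (proj1 ha) (proj2 ha)) as [h _].
  unfold sin_approx, sin_term in h; simpl in h; lra.
Qed.

Lemma sin_le_id t : 0 <= t -> sin t <= t.
Proof.
  intros [ht | <-]; [apply Rlt_le, sin_lt_x, ht | rewrite sin_0; lra].
Qed.

Lemma cos_sub_cos_bounds a r :
  0 <= a <= r -> r <= PI -> 0 <= cos a - cos r <= (r ^ 2 - a ^ 2) / 2.
Proof.
  intros ha hr.
  rewrite form2.
  replace ((a - r) / 2) with (- ((r - a) / 2)) by field; rewrite sin_neg.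
  pose proof (sin_le_id ((a + r) / 2)); pose proof (sin_le_id ((r - a) / 2)).
  assert (0 <= sin ((a + r) / 2)) by (apply sin_ge_0; lra).
  assert (0 <= sin ((r - a) / 2)) by (apply sin_ge_0; lra).
  split; nra.
Qed.

Lemma cos_sub_cos_circle r x y :
  0 <= r <= PI -> x ^ 2 + y ^ 2 = r ^ 2 -> 0 <= cos x - cos r <= y ^ 2 / 2.
Proof.
  intros hr hxy.
  replace (cos x) with (cos (Rabs x))
    by (unfold Rabs; destruct (Rcase_abs x); [rewrite cos_neg|]; reflexivity).
  assert (Rabs x ^ 2 = x ^ 2) by (rewrite <- !Rsqr_pow2; symmetry; apply Rsqr_abs).
  replace (y ^ 2) with (r ^ 2 - Rabs x ^ 2) by lra.
  apply cos_sub_cos_bounds; [split; [apply Rabs_pos | apply Rabs_le; split] |]; nra.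
Qed.

(* For x >= 0, [right_poly r x (cos r)] is a lower bound for
   cos r ((1 + x) cos x cosh y - y sin x sinh y) - (1 - r) (cos^2 x + sinh^2 y),
   where y^2 = r^2 - x^2; for x = -a <= 0, [y^2 * left_poly r a (cos r)] is a lower bound for
   r + a times that quantity. *)
Definition right_poly (r x k : R) : R :=
  k * (k * (1 + x) * (1 + (r ^ 2 - x ^ 2) / 2) - (1 - r))
  - 4 / 3 * k * x * (r ^ 2 - x ^ 2) - 16 / 9 * (1 - r) * (r ^ 2 - x ^ 2).

Definition left_poly (r a k : R) : R :=
  k * (k - (1 - r) * (r + a) / 2)
  + (r + a) * (k ^ 2 * (1 - a) / 2 + 5 / 6 * a * k - 16 / 9 * (1 - r)).

Lemma right_poly_nonneg r x k :
  0 < r < 1 -> 0 <= x <= r -> 1 - r ^ 2 / 2 <= k -> 0 <= right_poly r x k.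
Proof.
  intros hr hx hk; set (l := 1 - r ^ 2 / 2) in hk.
  assert (hl : 0 <= right_poly r x l).
  { unfold right_poly, l.
    assert (0 <= x * (r - x)) by nra.
    assert (0 <= r * r * (1 - r)) by nra.
    assert (0 <= r * (r - x) * (1 - r)) by nra.
    assert (0 <= r * (1 - r) * (1 - r)) by nra.
    nra. }
  set (P := (1 + x) * (1 + (r ^ 2 - x ^ 2) / 2)).
  assert (right_poly r x k - right_poly r x l
          = (k - l) * ((k + l) * P - (1 - r) - 4 / 3 * x * (r ^ 2 - x ^ 2)))
    by (unfold right_poly, P; ring).
  assert (0 <= (k - l) * ((k + l) * P - (1 - r) - 4 / 3 * x * (r ^ 2 - x ^ 2))).
  { apply Rmult_le_pos; [lra|].
    assert (0 <= r ^ 2 - x ^ 2) by nra.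
    assert (0 <= (1 + x) * (r ^ 2 - x ^ 2)) by nra.
    assert (1 + x <= P) by (unfold P; lra).
    assert (1 * (1 + x) <= (k + l) * P) by (apply Rmult_le_compat; unfold l in *; nra).
    assert (x * (r ^ 2 - x ^ 2) <= x * 1) by (apply Rmult_le_compat_l; nra).
    lra. }
  lra.
Qed.

Lemma left_poly_nonneg r a k :
  0 < r < 1 -> 0 <= a <= r -> 1 - r ^ 2 / 2 <= k -> 0 <= left_poly r a k.
Proof.
  intros hr ha hk; set (l := 1 - r ^ 2 / 2) in hk.
  assert (hl : 0 <= left_poly r a l).
  { unfold left_poly, l.
    assert (0 <= r * r * (1 - r)) by nra.
    assert (0 <= a * r * (1 - r)) by nra.
    assert (0 <= a * (r - a) * (1 - r)) by nra.
    assert (0 <= r * a * (r - a)) by nra.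
    assert (0 <= r * (1 - r) * (1 - r)) by nra.
    assert (0 <= a * (1 - r) * (1 - r)) by nra.
    nra. }
  set (Q := 1 + (r + a) * (1 - a) / 2).
  assert (left_poly r a k - left_poly r a l
          = (k - l) * ((k + l) * Q - (1 - r) * (r + a) / 2 + 5 / 6 * a * (r + a)))
    by (unfold left_poly, Q; field).
  assert (0 <= (k - l) * ((k + l) * Q - (1 - r) * (r + a) / 2 + 5 / 6 * a * (r + a))).
  { apply Rmult_le_pos; [lra|].
    assert (1 * 1 <= (k + l) * Q) by (apply Rmult_le_compat; unfold Q, l in *; nra).
    assert ((1 - r) * (r + a) <= 1) by nra.
    nra. }
  lra.
Qed.

Lemma min_ineq_right r x y k c s C S :
  0 < r < 1 -> 0 <= x -> x ^ 2 + y ^ 2 = r ^ 2 -> 0 <= y ->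
  1 - r ^ 2 / 2 <= k <= c -> c <= 1 -> 1 + y ^ 2 / 2 <= C ->
  0 <= s <= x -> 0 <= S <= 4 / 3 * y ->
  (1 - r) * (c ^ 2 + S ^ 2) <= k * ((1 + x) * c * C - y * s * S).
Proof.
  intros hr hx hxy hy hk hc hC hs hS.
  assert (hxr : x <= r) by nra.
  pose proof (right_poly_nonneg r x k hr (conj hx hxr) (proj1 hk)) as hpoly.
  unfold right_poly in hpoly; replace (r ^ 2 - x ^ 2) with (y ^ 2) in hpoly by lra.
  assert (hkr : 1 - r <= k) by nra.
  set (Z := k * (1 + x) * (1 + y ^ 2 / 2) - (1 - r)) in *.
  assert (hZ : 0 <= Z).
  { assert (1 <= (1 + x) * (1 + y ^ 2 / 2)) by nra.
    assert ((1 - r) * 1 <= k * ((1 + x) * (1 + y ^ 2 / 2))) by (apply Rmult_le_compat; lra).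
    unfold Z; lra. }
  assert (k * Z <= c * Z) by (apply Rmult_le_compat_r; lra).
  assert (k * (1 + x) * c * (1 + y ^ 2 / 2) <= k * (1 + x) * c * C).
  { apply Rmult_le_compat_l; [apply Rmult_le_pos|]; nra. }
  assert (s * S <= x * (4 / 3 * y)) by (apply Rmult_le_compat; lra).
  assert (k * (y * (s * S)) <= k * (y * (x * (4 / 3 * y)))).
  { apply Rmult_le_compat_l; [lra|]. apply Rmult_le_compat_l; lra. }
  assert (S * S <= (4 / 3 * y) * (4 / 3 * y)) by (apply Rmult_le_compat; lra).
  assert ((1 - r) * (S * S) <= (1 - r) * ((4 / 3 * y) * (4 / 3 * y)))
    by (apply Rmult_le_compat_l; lra).
  assert ((1 - r) * (c * c) <= (1 - r) * c) by (apply Rmult_le_compat_l; nra).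
  unfold Z in *; lra.
Qed.

Lemma min_ineq_left r a y k c sa C S :
  0 < r < 1 -> 0 <= a -> a ^ 2 + y ^ 2 = r ^ 2 -> 0 <= y ->
  1 - r ^ 2 / 2 <= k <= c -> c <= 1 -> c - k <= y ^ 2 / 2 ->
  1 + y ^ 2 / 2 <= C -> 5 / 6 * a <= sa -> y <= S <= 4 / 3 * y ->
  (1 - r) * (c ^ 2 + S ^ 2) <= k * ((1 - a) * c * C + y * sa * S).
Proof.
  intros hr ha hay hy hk hc hck hC hsa hS.
  assert (har : a <= r) by nra.
  assert (hk0 : 1 / 2 <= k) by nra.
  pose proof (left_poly_nonneg r a k hr (conj ha har) (proj1 hk)) as hpoly.
  set (inner := k * (1 - a) - (1 - r) * c).
  (* [inner] has no evident sign; since (r + a) (r - a) = y^2, [r + a] times it is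
     controlled by y^2. *)
  assert (hinner : y ^ 2 * (k - (1 - r) * (r + a) / 2) <= (r + a) * inner).
  { replace ((r + a) * inner) with (k * y ^ 2 - (r + a) * (1 - r) * (c - k))
      by (unfold inner; nra).
    assert ((r + a) * (1 - r) * (c - k) <= (r + a) * (1 - r) * (y ^ 2 / 2))
      by (apply Rmult_le_compat_l; nra).
    lra. }
  assert (0 <= inner)
    by (assert (0 <= y ^ 2 * (k - (1 - r) * (r + a) / 2)) by (apply Rmult_le_pos; nra); nra).
  set (lower := k * inner + k * (1 - a) * k * (y ^ 2 / 2) + k * (5 / 6 * a * y ^ 2)
                - 16 / 9 * (1 - r) * y ^ 2).
  assert (0 <= lower).
  { assert (k * (y ^ 2 * (k - (1 - r) * (r + a) / 2)) <= k * ((r + a) * inner))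
      by (apply Rmult_le_compat_l; lra).
    assert (0 <= y ^ 2 * left_poly r a k) by (apply Rmult_le_pos; nra).
    assert (0 <= (r + a) * lower) by (unfold lower, left_poly in *; lra).
    nra. }
  assert (k * inner <= c * inner) by (apply Rmult_le_compat_r; lra).
  assert (k * (1 - a) * c * (1 + y ^ 2 / 2) <= k * (1 - a) * c * C).
  { apply Rmult_le_compat_l; [repeat apply Rmult_le_pos|]; lra. }
  assert (k * (1 - a) * k * (y ^ 2 / 2) <= k * (1 - a) * c * (y ^ 2 / 2)).
  { apply Rmult_le_compat_r; [nra|]. apply Rmult_le_compat_l; [apply Rmult_le_pos|]; lra. }
  assert (k * (5 / 6 * a * y ^ 2) <= k * (y * sa * S)).
  { apply Rmult_le_compat_l; [lra|].
    replace (5 / 6 * a * y ^ 2) with (y * (5 / 6 * a) * y) by ring.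
    apply Rmult_le_compat; [apply Rmult_le_pos | | apply Rmult_le_compat_l |]; lra. }
  assert (S * S <= (4 / 3 * y) * (4 / 3 * y)) by (apply Rmult_le_compat; lra).
  assert ((1 - r) * (S * S) <= (1 - r) * ((4 / 3 * y) * (4 / 3 * y)))
    by (apply Rmult_le_compat_l; lra).
  unfold lower, inner in *; lra.
Qed.

Lemma min_ineq_nonneg_y r x y :
  0 < r < 1 -> x ^ 2 + y ^ 2 = r ^ 2 -> 0 <= y ->
  (1 - r) * (cos x ^ 2 + sinh y ^ 2)
  <= cos r * ((1 + x) * cos x * cosh y - y * sin x * sinh y).
Proof.
  intros hr hxy hy.
  pose proof PI2_1.
  assert (hy1 : y <= 1) by nra.
  pose proof (cos_ge_quadratic r ltac:(lra)).
  pose proof (cos_sub_cos_circle r x y ltac:(lra) hxy).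
  pose proof (COS_bound x).
  pose proof (cosh_ge_quadratic y hy).
  pose proof (id_le_sinh y hy); pose proof (sinh_le_linear y (conj hy hy1)).
  assert (-r <= x <= r) by (split; nra).
  destruct (Rle_or_lt 0 x) as [hx | hx].
  - apply min_ineq_right; try lra.
    split; [apply sin_ge_0 | apply sin_le_id]; lra.
  - replace ((1 + x) * cos x * cosh y - y * sin x * sinh y)
      with ((1 - - x) * cos x * cosh y + y * sin (- x) * sinh y)
      by (rewrite sin_neg; ring).
    pose proof (sin_ge_cubic (- x) ltac:(lra)).
    assert ((- x) ^ 3 <= - x) by (simpl; nra).
    apply min_ineq_left; lra.
Qed.

Lemma min_ineq r x y :
  0 < r < 1 -> x ^ 2 + y ^ 2 = r ^ 2 ->
  (1 - r) * (cos x ^ 2 + sinh y ^ 2)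
  <= cos r * ((1 + x) * cos x * cosh y - y * sin x * sinh y).
Proof.
  intros hr hxy.
  destruct (Rle_or_lt 0 y) as [hy | hy].
  - apply min_ineq_nonneg_y; assumption.
  - pose proof (min_ineq_nonneg_y r x (- y) hr ltac:(rewrite <- hxy; ring) ltac:(lra)) as h.
    rewrite cosh_neg, sinh_neg in h.
    replace (sinh y ^ 2) with ((- sinh y) ^ 2) by ring.
    replace (y * sin x * sinh y) with (- y * sin x * - sinh y) by ring.
    exact h.
Qed.

Lemma Ccos_pair x y : Ccos (x, y) = (cos x * cosh y, - (sin x * sinh y)).
Proof.
  unfold Ccos, Cexp, Cdiv, Cmult, Cplus, Copp, Cinv, Ci, RtoC, Re, Im, cosh, sinh; simpl.
  replace (0 * x - 1 * y) with (- y) by ring.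
  replace (0 * y + 1 * x) with x by ring.
  rewrite Ropp_involutive, cos_neg, sin_neg.
  f_equal; field.
Qed.

Lemma Cmod_Ccos_sqr x y : Cmod (Ccos (x, y)) ^ 2 = cos x ^ 2 + sinh y ^ 2.
Proof.
  rewrite Cmod2_alt, Ccos_pair; simpl.
  pose proof (sin2_cos2 x) as hsc; unfold Rsqr in hsc.
  pose proof (cosh_sqr_sub_sinh_sqr y) as hh; simpl in hh.
  nra.
Qed.

Lemma Re_phi_nc x y :
  Re (phi_nc (x, y)) =
  ((1 + x) * cos x * cosh y - y * sin x * sinh y) / (cos x ^ 2 + sinh y ^ 2).
Proof.
  rewrite <- Cmod_Ccos_sqr, Cmod2_alt.
  unfold phi_nc; rewrite Ccos_pair.
  unfold Cdiv, Cmult, Cplus, Cinv, RtoC; simpl.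
  unfold Rdiv; ring.
Qed.

Lemma phi_nc_real t : cos t <> 0 -> phi_nc (RtoC t) = RtoC ((1 + t) / cos t).
Proof.
  intros ht.
  unfold phi_nc, RtoC; rewrite Ccos_pair, cosh_0, sinh_0.
  unfold Cdiv, Cmult, Cplus, Cinv; simpl.
  f_equal; field; assumption.
Qed.

Lemma Cmod_pair_sqr x y r : Cmod (x, y) = r -> x ^ 2 + y ^ 2 = r ^ 2.
Proof. intros <-; rewrite Cmod2_alt; reflexivity. Qed.

Lemma cos_pos_lt_1 r : 0 <= r < 1 -> 0 < cos r.
Proof. intros hr; pose proof PI2_1; apply cos_gt_0; lra. Qed.

Lemma Re_phi_nc_ge r z :
  0 < r < 1 -> Cmod z = r -> (1 - r) / cos r <= Re (phi_nc z).
Proof.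
  intros hr hz; destruct z as [x y]; apply Cmod_pair_sqr in hz.
  pose proof (cos_pos_lt_1 r ltac:(lra)) as hk.
  pose proof (cos_sub_cos_circle r x y ltac:(pose proof PI2_1; lra) hz).
  assert (hD : 0 < cos x ^ 2 + sinh y ^ 2)
    by (pose proof (pow_lt (cos x) 2 ltac:(lra)); pose proof (pow2_ge_0 (sinh y)); lra).
  rewrite Re_phi_nc.
  apply (Rle_div_r _ _ _ hD).
  replace ((1 - r) / cos r * (cos x ^ 2 + sinh y ^ 2))
    with ((1 - r) * (cos x ^ 2 + sinh y ^ 2) / cos r) by (field; lra).
  apply (Rle_div_l _ _ _ hk).
  rewrite (Rmult_comm _ (cos r)); apply min_ineq; assumption.
Qed.

Lemma Re_phi_nc_le r z :
  0 < r < 1 -> Cmod z = r -> Re (phi_nc z) <= (1 + r) / cos r.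
Proof.
  intros hr hz.
  pose proof (cos_pos_lt_1 r ltac:(lra)) as hk.
  assert (hden : cos r <= Cmod (Ccos z)).
  { destruct z as [x y]; apply Cmod_pair_sqr in hz.
    pose proof (cos_sub_cos_circle r x y ltac:(pose proof PI2_1; lra) hz).
    pose proof (Cmod_Ccos_sqr x y); pose proof (Cmod_ge_0 (Ccos (x, y))).
    pose proof (pow2_ge_0 (sinh y)).
    nra. }
  assert (hnum : Cmod (RtoC 1 + z) <= 1 + r)
    by (pose proof (Cmod_triangle 1 z); rewrite Cmod_1 in *; lra).
  apply Rle_trans with (1 := Rle_abs _), Rle_trans with (1 := re_le_Cmod _).
  unfold phi_nc; rewrite Cmod_div by (intros h; rewrite h, Cmod_0 in hden; lra).
  unfold Rdiv; apply Rmult_le_compat; try lra.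
  - apply Cmod_ge_0.
  - apply Rlt_le, Rinv_0_lt_compat; lra.
  - apply Rinv_le_contravar; lra.
Qed.

Theorem mainTheorem2 (r : R) (hr0 : 0 < r) (hr1 : r < 1) :
  Im (phi_nc (RtoC (- r))) = 0 /\ Im (phi_nc (RtoC r)) = 0 /\
  (forall z : C, Cmod z = r ->
     Re (phi_nc (RtoC (- r))) <= Re (phi_nc z) /\
     Re (phi_nc z) <= Re (phi_nc (RtoC r))).
Proof.
  assert (hcos : cos r <> 0) by (apply Rgt_not_eq, cos_pos_lt_1; lra).
  rewrite (phi_nc_real (- r)), (phi_nc_real r) by (rewrite ?cos_neg; exact hcos).
  rewrite cos_neg.
  split; [reflexivity|]; split; [reflexivity|].
  intros z hz; split; [apply Re_phi_nc_ge | apply Re_phi_nc_le]; auto.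
Qed.
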